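(* Let $D\in\mathcal{L}(Y)$ have a g-Drazin inverse, and let $B\in\mathcal{L}(Y,X)$, $C\in\mathcal{L}(X,Y)$. If $DCB=0$ and $CBCB=0$, then the operator matrix $\begin{pmatrix}0&B\\ C&D\end{pmatrix}$ on $X\oplus Y$ has a g-Drazin inverse.
   Context: $X,Y$ are complex Banach spaces; $\mathcal{L}(X)$ denotes the Banach algebra of bounded linear operators on $X$, and $\mathcal{L}(Y,X)$ the bounded operators from $Y$ to $X$. An element $a$ of a unital Banach algebra $\mathcal{A}$ is quasinilpotent if $\lim_{n\to\infty}\|a^n\|^{1/n}=0$. An element $a\in\mathcal{A}$ has a g-Drazin (generalized Drazin) inverse if there exists $x\in\mathcal{A}$ with $x=xax$, $ax=xa$, and $a-a^2x$ quasinilpotent; such $x$ is unique and is denoted $a^d$. *)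

From Stdlib Require Import Reals Lra ClassicalEpsilon FunctionalExtensionality.
Open Scope R_scope.

Definition Cplx : Type := (R * R)%type.
Definition C0 : Cplx := (0, 0).
Definition C1 : Cplx := (1, 0).
Definition Cadd (a b : Cplx) : Cplx := (fst a + fst b, snd a + snd b).
Definition Cmul (a b : Cplx) : Cplx :=
  (fst a * fst b - snd a * snd b, fst a * snd b + snd a * fst b).
Definition Cmod (a : Cplx) : R := sqrt (fst a ^ 2 + snd a ^ 2).

Record NormedCSpace : Type := {
  vcar :> Type;
  vzero : vcar;
  vadd : vcar -> vcar -> vcar;
  vopp : vcar -> vcar;
  vscal : Cplx -> vcar -> vcar;
  vnorm : vcar -> R;
  vadd_assoc : forall x y z, vadd x (vadd y z) = vadd (vadd x y) z;
  vadd_comm : forall x y, vadd x y = vadd y x;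
  vadd_0 : forall x, vadd x vzero = x;
  vadd_opp : forall x, vadd x (vopp x) = vzero;
  vscal_1 : forall x, vscal C1 x = x;
  vscal_assoc : forall a b x, vscal a (vscal b x) = vscal (Cmul a b) x;
  vscal_distr_v : forall a x y, vscal a (vadd x y) = vadd (vscal a x) (vscal a y);
  vscal_distr_c : forall a b x, vscal (Cadd a b) x = vadd (vscal a x) (vscal b x);
  vnorm_nonneg : forall x, 0 <= vnorm x;
  vnorm_eq0 : forall x, vnorm x = 0 -> x = vzero;
  vnorm_triangle : forall x y, vnorm (vadd x y) <= vnorm x + vnorm y;
  vnorm_scal : forall a x, vnorm (vscal a x) = Cmod a * vnorm x
}.

Arguments vzero {_}.
Arguments vadd {_} _ _.
Arguments vopp {_} _.
Arguments vscal {_} _ _.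
Arguments vnorm {_} _.

Definition complete (X : NormedCSpace) : Prop :=
  forall u : nat -> X,
    (forall eps, 0 < eps -> exists N, forall m n, (N <= m)%nat -> (N <= n)%nat ->
        vnorm (vadd (u m) (vopp (u n))) < eps) ->
    exists l : X, forall eps, 0 < eps -> exists N, forall n, (N <= n)%nat ->
        vnorm (vadd (u n) (vopp l)) < eps.

Definition is_bounded_linear {X Y : NormedCSpace} (f : X -> Y) : Prop :=
  (forall x y, f (vadd x y) = vadd (f x) (f y)) /\
  (forall a x, f (vscal a x) = vscal a (f x)) /\
  (exists M, forall x, vnorm (f x) <= M * vnorm x).

Definition opnorm {X Y : NormedCSpace} (f : X -> Y) : R :=
  epsilon (inhabits 0) (is_lub (fun r => exists x : X, vnorm x <= 1 /\ r = vnorm (f x))).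

(** n-th root of a nonnegative real, r^(1/n) (with 0^(1/n) = 0). *)
Definition nroot (r : R) (n : nat) : R :=
  if Rlt_dec 0 r then Rpower r (/ INR n) else 0.

Definition opow {Z : NormedCSpace} (a : Z -> Z) (n : nat) : Z -> Z :=
  Nat.iter n (fun g z => a (g z)) (fun z => z).

Definition quasinilpotent {Z : NormedCSpace} (a : Z -> Z) : Prop :=
  Un_cv (fun n => nroot (opnorm (opow a n)) n) 0.

Definition has_gDrazin {Z : NormedCSpace} (a : Z -> Z) : Prop :=
  exists x : Z -> Z,
    is_bounded_linear x /\
    (fun z => x (a (x z))) = x /\
    (fun z => a (x z)) = (fun z => x (a z)) /\
    quasinilpotent (fun z => vadd (a z) (vopp (a (a (x z))))).

Section DirectSum.
Variables X Y : NormedCSpace.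

Definition ds_zero : X * Y := (vzero, vzero).
Definition ds_add (p q : X * Y) : X * Y := (vadd (fst p) (fst q), vadd (snd p) (snd q)).
Definition ds_opp (p : X * Y) : X * Y := (vopp (fst p), vopp (snd p)).
Definition ds_scal (a : Cplx) (p : X * Y) : X * Y := (vscal a (fst p), vscal a (snd p)).
Definition ds_norm (p : X * Y) : R := vnorm (fst p) + vnorm (snd p).

Lemma ds_add_assoc : forall x y z, ds_add x (ds_add y z) = ds_add (ds_add x y) z.
Proof. intros [] [] []; unfold ds_add; simpl; now rewrite !vadd_assoc. Qed.
Lemma ds_add_comm : forall x y, ds_add x y = ds_add y x.
Proof. intros [] []; unfold ds_add; simpl; f_equal; apply vadd_comm. Qed.
Lemma ds_add_0 : forall x, ds_add x ds_zero = x.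
Proof. intros []; unfold ds_add; simpl; now rewrite !vadd_0. Qed.
Lemma ds_add_opp : forall x, ds_add x (ds_opp x) = ds_zero.
Proof. intros []; unfold ds_add; simpl; now rewrite !vadd_opp. Qed.
Lemma ds_scal_1 : forall x, ds_scal C1 x = x.
Proof. intros []; unfold ds_scal; simpl; now rewrite !vscal_1. Qed.
Lemma ds_scal_assoc : forall a b x, ds_scal a (ds_scal b x) = ds_scal (Cmul a b) x.
Proof. intros a b []; unfold ds_scal; simpl; now rewrite !vscal_assoc. Qed.
Lemma ds_scal_distr_v : forall a x y, ds_scal a (ds_add x y) = ds_add (ds_scal a x) (ds_scal a y).
Proof. intros a [] []; unfold ds_scal, ds_add; simpl; now rewrite !vscal_distr_v. Qed.
Lemma ds_scal_distr_c : forall a b x, ds_scal (Cadd a b) x = ds_add (ds_scal a x) (ds_scal b x).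
Proof. intros a b []; unfold ds_scal, ds_add; simpl; now rewrite !vscal_distr_c. Qed.
Lemma ds_norm_nonneg : forall x, 0 <= ds_norm x.
Proof. intros [x y]; unfold ds_norm; simpl; pose proof (vnorm_nonneg X x); pose proof (vnorm_nonneg Y y); lra. Qed.
Lemma ds_norm_eq0 : forall x, ds_norm x = 0 -> x = ds_zero.
Proof.
  intros [x y]; unfold ds_norm, ds_zero; simpl; intro H.
  pose proof (vnorm_nonneg X x); pose proof (vnorm_nonneg Y y).
  rewrite (vnorm_eq0 X x), (vnorm_eq0 Y y); auto; lra.
Qed.
Lemma ds_norm_triangle : forall x y, ds_norm (ds_add x y) <= ds_norm x + ds_norm y.
Proof.
  intros [x1 y1] [x2 y2]; unfold ds_norm, ds_add; simpl.
  pose proof (vnorm_triangle X x1 x2); pose proof (vnorm_triangle Y y1 y2); lra.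
Qed.
Lemma ds_norm_scal : forall a x, ds_norm (ds_scal a x) = Cmod a * ds_norm x.
Proof. intros a []; unfold ds_norm, ds_scal; simpl; rewrite !vnorm_scal; ring. Qed.

Definition DirectSum : NormedCSpace :=
  {| vcar := (X * Y)%type; vzero := ds_zero; vadd := ds_add; vopp := ds_opp;
     vscal := ds_scal; vnorm := ds_norm;
     vadd_assoc := ds_add_assoc; vadd_comm := ds_add_comm; vadd_0 := ds_add_0;
     vadd_opp := ds_add_opp; vscal_1 := ds_scal_1; vscal_assoc := ds_scal_assoc;
     vscal_distr_v := ds_scal_distr_v; vscal_distr_c := ds_scal_distr_c;
     vnorm_nonneg := ds_norm_nonneg; vnorm_eq0 := ds_norm_eq0;
     vnorm_triangle := ds_norm_triangle; vnorm_scal := ds_norm_scal |}.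
End DirectSum.

Definition opmatrix {X Y : NormedCSpace} (B : Y -> X) (C : X -> Y) (D : Y -> Y)
  : DirectSum X Y -> DirectSum X Y :=
  fun p => (B (snd p), vadd (C (fst p)) (D (snd p))).

(* Let G = D^d and let P = I - GD be the spectral idempotent of D.  The g-Drazin
   inverse of M = [[0, B], [C, D]] is the operator matrix
     Minv = [[B K G^2 C, B K G], [K G C, K]],   K = G + CB G^3;
   Minv M Minv = Minv and M Minv = Minv M are direct computations using DCB = 0,
   CBCB = 0 and GCB = G^2 DCB = 0.  The residual N = M - M^2 Minv has the same
   block shape, and so have its powers: N^(m+1) = [[B e_m C, B e_(m+1)],
   [e_(m+1) C, e_(m+2)]] with e_(k+3) = D^(k+2) P + CB D^k P.  Since
   D^(j+k) P = (DP)^j D^k P, this gives ||N^(n+4)|| <= c ||(DP)^n||, and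
   DP = D - D^2 G is quasinilpotent, hence so is N. *)

From Stdlib Require Import Reals Lra Lia ZArith List ClassicalEpsilon FunctionalExtensionality.
Import ListNotations.

Section AbelianGroup.
Variable V : NormedCSpace.
Implicit Types x y z w : V.

Lemma vadd_0_l x : vadd vzero x = x.
Proof. rewrite vadd_comm; apply vadd_0. Qed.

Lemma vadd_opp_l x : vadd (vopp x) x = vzero.
Proof. rewrite vadd_comm; apply vadd_opp. Qed.

Lemma vadd_cancel_l x y z : vadd x y = vadd x z -> y = z.
Proof.
  intro E.
  rewrite <- (vadd_0_l y), <- (vadd_0_l z), <- (vadd_opp_l x), <- !vadd_assoc, E.
  reflexivity.
Qed.

Lemma vopp_unique x y : vadd x y = vzero -> y = vopp x.
Proof. intro E; apply (vadd_cancel_l x); rewrite E, vadd_opp; reflexivity. Qed.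

Lemma vsub_eq0 x y : vadd x (vopp y) = vzero -> x = y.
Proof.
  intro E. rewrite <- (vadd_0 _ x), <- (vadd_opp_l y), vadd_assoc, E. apply vadd_0_l.
Qed.

Lemma vadd_addACA x y z w : vadd (vadd x y) (vadd z w) = vadd (vadd x z) (vadd y w).
Proof.
  rewrite <- !vadd_assoc; f_equal. rewrite !vadd_assoc; f_equal; apply vadd_comm.
Qed.

Definition zscal (k : Z) x : V := vscal (IZR k, 0%R) x.

Lemma zscal_add k l x : zscal (k + l) x = vadd (zscal k x) (zscal l x).
Proof.
  unfold zscal; rewrite <- vscal_distr_c, plus_IZR.
  unfold Cadd; cbn [fst snd]; rewrite Rplus_0_r; reflexivity.
Qed.

Lemma zscal_0 x : zscal 0 x = vzero.
Proof.
  apply (vadd_cancel_l (zscal 0 x)). rewrite <- zscal_add, vadd_0. reflexivity.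
Qed.

Lemma zscal_opp k x : zscal (- k) x = vopp (zscal k x).
Proof. apply vopp_unique; rewrite <- zscal_add, Z.add_opp_diag_r; apply zscal_0. Qed.

Lemma zscal_1 x : zscal 1 x = x.
Proof. apply vscal_1. Qed.
End AbelianGroup.

Inductive gterm := GVar (n : nat) | GZero | GAdd (s t : gterm) | GOpp (s : gterm).

Fixpoint geval {V : NormedCSpace} (env : list V) (t : gterm) : V :=
  match t with
  | GVar n => nth n env vzero
  | GZero => vzero
  | GAdd s t => vadd (geval env s) (geval env t)
  | GOpp s => vopp (geval env s)
  end.

(* A term is normalised to its list of integer coefficients on the variables. *)
Fixpoint coeffs_add (l1 l2 : list Z) : list Z :=
  match l1, l2 with
  | [], _ => l2
  | _, [] => l1
  | a :: l1', b :: l2' => (a + b)%Z :: coeffs_add l1' l2'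
  end.

Fixpoint coeffs_var (n : nat) : list Z :=
  match n with O => [1%Z] | S k => 0%Z :: coeffs_var k end.

Fixpoint coeffs (t : gterm) : list Z :=
  match t with
  | GVar n => coeffs_var n
  | GZero => []
  | GAdd s t => coeffs_add (coeffs s) (coeffs t)
  | GOpp s => map Z.opp (coeffs s)
  end.

Fixpoint ceval {V : NormedCSpace} (env : list V) (l : list Z) {struct l} : V :=
  match l with
  | [] => vzero
  | k :: l' =>
    match env with [] => vzero | x :: env' => vadd (zscal V k x) (ceval env' l') end
  end.

Section Normalisation.
Variable V : NormedCSpace.

Lemma ceval_add (env : list V) l1 l2 :
  ceval env (coeffs_add l1 l2) = vadd (ceval env l1) (ceval env l2).
Proof.
  revert env l2; induction l1 as [|a l1 IH]; intros env l2.
  - destruct env; simpl; rewrite vadd_0_l; reflexivity.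
  - destruct l2 as [|b l2], env as [|x env]; simpl; rewrite ?vadd_0, ?vadd_0_l; try reflexivity.
    rewrite IH, zscal_add. apply vadd_addACA.
Qed.

Lemma ceval_opp (env : list V) l : ceval env (map Z.opp l) = vopp (ceval env l).
Proof.
  revert env; induction l as [|a l IH]; intros [|x env]; simpl;
    try (apply vopp_unique, vadd_0).
  rewrite IH, zscal_opp. apply vopp_unique.
  rewrite vadd_addACA, !vadd_opp. apply vadd_0.
Qed.

Lemma ceval_var (env : list V) n : ceval env (coeffs_var n) = nth n env vzero.
Proof.
  revert env; induction n as [|n IH]; intros [|x env]; simpl; try reflexivity.
  - rewrite zscal_1; apply vadd_0.
  - rewrite IH, zscal_0; apply vadd_0_l.
Qed.

Lemma geval_coeffs (env : list V) t : geval env t = ceval env (coeffs t).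
Proof.
  induction t; simpl.
  - symmetry; apply ceval_var.
  - destruct env; reflexivity.
  - rewrite ceval_add, IHt1, IHt2; reflexivity.
  - rewrite ceval_opp, IHt; reflexivity.
Qed.

Lemma ceval_zero (env : list V) l : forallb (Z.eqb 0) l = true -> ceval env l = vzero.
Proof.
  revert env; induction l as [|a l IH]; intros [|x env] H; cbn [ceval forallb] in *;
    try reflexivity.
  apply andb_prop in H as [Ha Hl]. apply Z.eqb_eq in Ha; subst a.
  rewrite IH, zscal_0 by exact Hl. apply vadd_0.
Qed.

Lemma geval_eq (env : list V) s t :
  forallb (Z.eqb 0) (coeffs (GAdd s (GOpp t))) = true -> geval env s = geval env t.
Proof.
  intro H. apply vsub_eq0. change (geval env (GAdd s (GOpp t)) = vzero).
  rewrite geval_coeffs. apply ceval_zero, H.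
Qed.
End Normalisation.

Ltac list_index x l :=
  lazymatch l with
  | x :: _ => constr:(O)
  | _ :: ?l' => let n := list_index x l' in constr:(S n)
  end.

Ltac list_mem x l :=
  lazymatch l with
  | [] => constr:(false)
  | x :: _ => constr:(true)
  | _ :: ?l' => list_mem x l'
  end.

Ltac gatoms t acc :=
  lazymatch t with
  | vadd ?a ?b => let acc' := gatoms a acc in gatoms b acc'
  | vopp ?a => gatoms a acc
  | vzero => acc
  | _ => lazymatch list_mem t acc with
         | true => acc
         | false => constr:(t :: acc)
         end
  end.

Ltac greify env t :=
  lazymatch t with
  | vadd ?a ?b => let s := greify env a in let u := greify env b in constr:(GAdd s u)
  | vopp ?a => let s := greify env a in constr:(GOpp s)
  | vzero => constr:(GZero)
  | _ => let n := list_index t env in constr:(GVar n)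
  end.

(* Decides equalities in the additive group of a normed space, treating
   every non-group subterm as an atom. *)
Ltac abel :=
  lazymatch goal with
  | |- @eq (vcar ?V) ?a ?b =>
    let env0 := gatoms a (@nil (vcar V)) in
    let env := gatoms b env0 in
    let s := greify env a in let t := greify env b in
    change (geval env s = geval env t); apply geval_eq; vm_compute; reflexivity
  end.


Open Scope R_scope.

Section Norm.
Variable V : NormedCSpace.
Implicit Types x y : V.

Lemma Cmod_real r : Cmod (r, 0) = Rabs r.
Proof.
  unfold Cmod; cbn [fst snd].
  replace (r ^ 2 + 0 ^ 2) with (Rsqr r) by (unfold Rsqr; ring).
  apply sqrt_Rsqr_abs.
Qed.

Lemma vnorm_zscal k x : vnorm (zscal V k x) = Rabs (IZR k) * vnorm x.
Proof. unfold zscal; rewrite vnorm_scal, Cmod_real; reflexivity. Qed.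

Lemma vnorm_zero : vnorm (@vzero V) = 0.
Proof. rewrite <- (zscal_0 V vzero), vnorm_zscal, Rabs_R0; ring. Qed.

Lemma vnorm_opp x : vnorm (vopp x) = vnorm x.
Proof.
  rewrite <- (zscal_1 V x) at 1; rewrite <- zscal_opp, vnorm_zscal.
  change (IZR (- (1))) with (-1); rewrite Rabs_left by lra; lra.
Qed.
End Norm.

Definition op_bound {V W : NormedCSpace} (f : V -> W) (c : R) : Prop :=
  forall v, vnorm (f v) <= c * vnorm v.

Section Operators.
Context {V W : NormedCSpace}.

Lemma op_bound_le (f : V -> W) a b : op_bound f a -> a <= b -> op_bound f b.
Proof.
  intros Hf Hab v. eapply Rle_trans; [apply Hf|].
  apply Rmult_le_compat_r; [apply vnorm_nonneg|exact Hab].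
Qed.

Lemma op_bound_add (f g : V -> W) a b :
  op_bound f a -> op_bound g b -> op_bound (fun v => vadd (f v) (g v)) (a + b).
Proof.
  intros Hf Hg v. eapply Rle_trans; [apply vnorm_triangle|].
  specialize (Hf v); specialize (Hg v); lra.
Qed.

Lemma op_bound_opp (f : V -> W) a : op_bound f a -> op_bound (fun v => vopp (f v)) a.
Proof. intros Hf v; rewrite vnorm_opp; apply Hf. Qed.

Lemma lin_add (f : V -> W) : is_bounded_linear f -> forall x y, f (vadd x y) = vadd (f x) (f y).
Proof. intros [H _]; exact H. Qed.

Lemma lin_scal (f : V -> W) : is_bounded_linear f -> forall a x, f (vscal a x) = vscal a (f x).
Proof. intros [_ [H _]]; exact H. Qed.

Lemma lin_zero (f : V -> W) : is_bounded_linear f -> f vzero = vzero.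
Proof.
  intro Hf. apply (vadd_cancel_l _ (f vzero)). rewrite <- lin_add, !vadd_0 by exact Hf.
  reflexivity.
Qed.

Lemma lin_opp (f : V -> W) : is_bounded_linear f -> forall x, f (vopp x) = vopp (f x).
Proof.
  intros Hf x. apply vopp_unique. rewrite <- lin_add, vadd_opp by exact Hf. apply lin_zero, Hf.
Qed.

Lemma opnorm_lub (f : V -> W) c :
  op_bound f c -> is_lub (fun r => exists v : V, vnorm v <= 1 /\ r = vnorm (f v)) (opnorm f).
Proof.
  intro Hc. unfold opnorm. apply epsilon_spec.
  destruct (completeness (fun r => exists v : V, vnorm v <= 1 /\ r = vnorm (f v)))
    as [m Hm]; [| |exists m; exact Hm].
  - exists (Rabs c). intros r [v [Hv ->]]. eapply Rle_trans; [apply Hc|].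
    pose proof (vnorm_nonneg _ v). pose proof (Rle_abs c). pose proof (Rabs_pos c). nra.
  - exists (vnorm (f vzero)), vzero. rewrite vnorm_zero. split; [lra|reflexivity].
Qed.

Lemma opnorm_nonneg (f : V -> W) c : op_bound f c -> 0 <= opnorm f.
Proof.
  intro Hc. apply Rle_trans with (vnorm (f vzero)); [apply vnorm_nonneg|].
  apply (opnorm_lub f c Hc). exists vzero. rewrite vnorm_zero. split; [lra|reflexivity].
Qed.

Lemma opnorm_le (f : V -> W) c : 0 <= c -> op_bound f c -> opnorm f <= c.
Proof.
  intros Hc Hf. apply (opnorm_lub f c Hf). intros r [v [Hv ->]].
  eapply Rle_trans; [apply Hf|]. nra.
Qed.

(* Apply the supremum to [v / ||v||]. *)
Lemma op_bound_opnorm (f : V -> W) : is_bounded_linear f -> op_bound f (opnorm f).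
Proof.
  intros Hf v. pose proof Hf as (_ & Hscal & c & Hc).
  destruct (Req_dec (vnorm v) 0) as [Hz|Hz].
  - rewrite Hz, (vnorm_eq0 _ _ Hz), (lin_zero f Hf), vnorm_zero. lra.
  - assert (Hp : 0 < vnorm v) by (pose proof (vnorm_nonneg _ v); lra).
    assert (Hu : vnorm (vscal (/ vnorm v, 0) v) <= 1).
    { rewrite vnorm_scal, Cmod_real, Rabs_pos_eq by (left; apply Rinv_0_lt_compat, Hp).
      rewrite Rinv_l by lra. lra. }
    assert (Hfu : vnorm (f (vscal (/ vnorm v, 0) v)) <= opnorm f)
      by (apply (opnorm_lub f c Hc); eexists; split; [exact Hu|reflexivity]).
    rewrite Hscal, vnorm_scal, Cmod_real, Rabs_pos_eq in Hfu
      by (left; apply Rinv_0_lt_compat, Hp).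
    apply Rmult_le_reg_l with (/ vnorm v); [apply Rinv_0_lt_compat, Hp|].
    replace (/ vnorm v * (opnorm f * vnorm v)) with (opnorm f) by (field; lra).
    exact Hfu.
Qed.

Lemma opnorm_bound_nonneg (f : V -> W) : is_bounded_linear f -> 0 <= opnorm f.
Proof. intro Hf; exact (opnorm_nonneg f _ (op_bound_opnorm f Hf)). Qed.

Lemma lin_id : is_bounded_linear (fun v : V => v).
Proof. split; [|split]; auto. exists 1; intro; lra. Qed.

Lemma lin_plus (f g : V -> W) :
  is_bounded_linear f -> is_bounded_linear g -> is_bounded_linear (fun v => vadd (f v) (g v)).
Proof.
  intros Hf Hg. split; [|split].
  - intros; rewrite (lin_add f Hf), (lin_add g Hg); abel.
  - intros; rewrite (lin_scal f Hf), (lin_scal g Hg), vscal_distr_v; reflexivity.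
  - exists (opnorm f + opnorm g). apply op_bound_add; apply op_bound_opnorm; assumption.
Qed.

Lemma vscal_opp a (x : W) : vscal a (vopp x) = vopp (vscal a x).
Proof.
  apply vopp_unique. rewrite <- vscal_distr_v, vadd_opp.
  apply (vadd_cancel_l _ (vscal a vzero)). rewrite <- vscal_distr_v, !vadd_0. reflexivity.
Qed.

Lemma lin_neg (f : V -> W) : is_bounded_linear f -> is_bounded_linear (fun v => vopp (f v)).
Proof.
  intros Hf. split; [|split].
  - intros; rewrite (lin_add f Hf); abel.
  - intros; rewrite (lin_scal f Hf), vscal_opp; reflexivity.
  - exists (opnorm f). apply op_bound_opp, op_bound_opnorm, Hf.
Qed.
End Operators.

Lemma op_bound_comp {U V W : NormedCSpace} (f : U -> V) (g : V -> W) a :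
  is_bounded_linear g -> op_bound f a -> op_bound (fun u => g (f u)) (opnorm g * a).
Proof.
  intros Hg Hf u. eapply Rle_trans; [apply op_bound_opnorm, Hg|].
  rewrite Rmult_assoc; apply Rmult_le_compat_l; [apply opnorm_bound_nonneg, Hg|apply Hf].
Qed.

Lemma lin_comp {U V W : NormedCSpace} (f : U -> V) (g : V -> W) :
  is_bounded_linear f -> is_bounded_linear g -> is_bounded_linear (fun u => g (f u)).
Proof.
  intros Hf Hg. split; [|split].
  - intros; rewrite (lin_add f Hf), (lin_add g Hg); reflexivity.
  - intros; rewrite (lin_scal f Hf), (lin_scal g Hg); reflexivity.
  - exists (opnorm g * opnorm f). apply op_bound_comp, op_bound_opnorm; assumption.
Qed.


Lemma opow_lin {Z : NormedCSpace} (a : Z -> Z) n :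
  is_bounded_linear a -> is_bounded_linear (opow a n).
Proof.
  intro Ha. induction n as [|n IH]; [apply lin_id|].
  exact (lin_comp (opow a n) a IH Ha).
Qed.

Lemma Rpower_pow_inv d n : 0 < d -> n <> 0%nat -> Rpower (d ^ n) (/ INR n) = d.
Proof.
  intros Hd Hn. rewrite <- Rpower_pow, Rpower_mult, Rinv_r, Rpower_1 by (auto; apply not_0_INR, Hn).
  reflexivity.
Qed.

Lemma nroot_lt_iff x d n : 0 < x -> 0 < d -> n <> 0%nat -> nroot x n < d <-> x < d ^ n.
Proof.
  intros Hx Hd Hn. unfold nroot. destruct (Rlt_dec 0 x) as [_|]; [|lra].
  assert (Hc : 0 < / INR n) by (apply Rinv_0_lt_compat, lt_0_INR; lia).
  rewrite <- (Rpower_pow_inv d n Hd Hn) at 1. split; intro H.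
  - apply Rnot_le_lt; intro Hle. apply (Rlt_not_le _ _ H).
    apply Rle_Rpower_l; [lra|split; [apply pow_lt, Hd|exact Hle]].
  - apply Rlt_Rpower_l; [exact Hc|split; assumption].
Qed.

Lemma nroot_nonneg x n : 0 <= nroot x n.
Proof. unfold nroot, Rpower. destruct (Rlt_dec 0 x); [left; apply exp_pos|lra]. Qed.

Lemma nroot_lt_pow x d n : 0 <= x -> n <> 0%nat -> nroot x n < d -> x < d ^ n.
Proof.
  intros Hx Hn H. assert (Hd : 0 < d) by (pose proof (nroot_nonneg x n); lra).
  destruct (Rle_lt_or_eq_dec 0 x Hx) as [Hp|<-].
  - apply nroot_lt_iff; assumption.
  - apply pow_lt, Hd.
Qed.

Lemma pow_lt_nroot x d n : 0 <= x -> 0 < d -> n <> 0%nat -> x < d ^ n -> nroot x n < d.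
Proof.
  intros Hx Hd Hn H. destruct (Rle_lt_or_eq_dec 0 x Hx) as [Hp|<-].
  - apply nroot_lt_iff; assumption.
  - unfold nroot. destruct (Rlt_dec 0 0); lra.
Qed.

Lemma INR_le_pow2 n : INR n <= 2 ^ n.
Proof.
  induction n as [|n IH]; [simpl; lra|].
  rewrite S_INR; simpl. pose proof (pow_R1_Rle 2 n ltac:(lra)). lra.
Qed.

(* For [n = k + m]: [b n <= c a m < c d^m <= (2d)^n] once [2^n d^k > c]. *)
Lemma nroot_cv0_of_le (a b : nat -> R) (c : R) (k : nat) :
  (forall n, 0 <= a n) -> (forall n, 0 <= b (k + n)%nat) -> 0 <= c ->
  (forall n, b (k + n)%nat <= c * a n) ->
  Un_cv (fun n => nroot (a n) n) 0 -> Un_cv (fun n => nroot (b n) n) 0.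
Proof.
  intros Ha Hb Hc Hab Hcv eps Heps.
  set (d := eps / 2). assert (Hd : 0 < d) by (unfold d; lra).
  destruct (Hcv d Hd) as [N0 HN0].
  assert (Hdk : 0 < d ^ k) by (apply pow_lt, Hd).
  destruct (INR_unbounded (c / d ^ k)) as [N1 HN1].
  exists (k + N0 + N1 + 1)%nat. intros n Hn.
  replace n with (k + (n - k))%nat by lia. set (m := (n - k)%nat).
  assert (Hm : (N0 <= m)%nat /\ (N1 <= k + m)%nat /\ m <> 0%nat) by (unfold m; lia).
  unfold R_dist. rewrite Rminus_0_r, Rabs_pos_eq by apply nroot_nonneg.
  apply pow_lt_nroot; [apply Hb|lra|lia|].
  assert (Ham : a m < d ^ m).
  { apply nroot_lt_pow; [apply Ha|lia|].
    specialize (HN0 m ltac:(lia)). unfold R_dist in HN0.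
    rewrite Rminus_0_r, Rabs_pos_eq in HN0 by apply nroot_nonneg. exact HN0. }
  assert (Hc2 : c < 2 ^ (k + m) * d ^ k).
  { apply Rmult_lt_reg_r with (/ d ^ k); [apply Rinv_0_lt_compat, Hdk|].
    rewrite Rmult_assoc, Rinv_r, Rmult_1_r by lra.
    apply Rlt_le_trans with (INR N1); [unfold Rdiv in HN1; lra|].
    apply Rle_trans with (INR (k + m)); [apply le_INR; lia|apply INR_le_pow2]. }
  assert (Hdm : 0 < d ^ m) by (apply pow_lt, Hd).
  replace (eps ^ (k + m)) with (2 ^ (k + m) * d ^ k * d ^ m)
    by (replace eps with (2 * d) by (unfold d; lra);
        rewrite Rpow_mult_distr, !pow_add; ring).
  apply Rle_lt_trans with (c * a m); [apply Hab|].
  apply Rle_lt_trans with (c * d ^ m); [apply Rmult_le_compat_l; lra|].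
  apply Rmult_lt_compat_r; assumption.
Qed.

Lemma quasinilpotent_of_pow_bound {V W : NormedCSpace} (a : V -> V) (b : W -> W) (c : R) (k : nat) :
  is_bounded_linear a -> 0 <= c ->
  (forall n, op_bound (opow b (k + n)) (c * opnorm (opow a n))) ->
  quasinilpotent a -> quasinilpotent b.
Proof.
  intros Ha Hc Hb. apply (nroot_cv0_of_le _ _ c k).
  - intro n; apply opnorm_bound_nonneg, opow_lin, Ha.
  - intro n; exact (opnorm_nonneg _ _ (Hb n)).
  - exact Hc.
  - intro n; apply opnorm_le, Hb.
    apply Rmult_le_pos; [exact Hc|apply opnorm_bound_nonneg, opow_lin, Ha].
Qed.

Section Blocks.
Variables (X Y : NormedCSpace) (B : Y -> X) (C : X -> Y).
Hypotheses (HB : is_bounded_linear B) (HC : is_bounded_linear C).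

(* The operator matrix [[B u0 C, B u1], [u1 C, u2]] on X (+) Y. *)
Definition block (u0 u1 u2 : Y -> Y) (p : DirectSum X Y) : DirectSum X Y :=
  (B (vadd (u0 (C (fst p))) (u1 (snd p))), vadd (u1 (C (fst p))) (u2 (snd p))).

Lemma op_bound_block (u0 u1 u2 : Y -> Y) a : 0 <= a ->
  op_bound u0 a -> op_bound u1 a -> op_bound u2 a ->
  op_bound (block u0 u1 u2) ((opnorm B + 1) * (opnorm C + 1) * a).
Proof.
  intros Ha H0 H1 H2 [x y]. change (vnorm (B (vadd (u0 (C x)) (u1 y)))
    + vnorm (vadd (u1 (C x)) (u2 y)) <= (opnorm B + 1) * (opnorm C + 1) * a
    * (vnorm x + vnorm y)).
  pose proof (opnorm_bound_nonneg B HB) as HnB.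
  pose proof (opnorm_bound_nonneg C HC) as HnC.
  pose proof (vnorm_nonneg _ x) as Hx; pose proof (vnorm_nonneg _ y) as Hy.
  assert (Hrow : forall v w : Y -> Y, op_bound v a -> op_bound w a ->
    vnorm (vadd (v (C x)) (w y)) <= a * (opnorm C * vnorm x + vnorm y)).
  { intros v w Hv Hw. eapply Rle_trans; [apply vnorm_triangle|].
    pose proof (Hv (C x)); pose proof (Hw y).
    assert (a * vnorm (C x) <= a * (opnorm C * vnorm x))
      by (apply Rmult_le_compat_l; [exact Ha|apply op_bound_opnorm, HC]).
    lra. }
  pose proof (Hrow u0 u1 H0 H1) as Hr1; pose proof (Hrow u1 u2 H1 H2) as Hr2.
  pose proof (op_bound_opnorm B HB (vadd (u0 (C x)) (u1 y))) as HBw.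
  set (s := a * (opnorm C * vnorm x + vnorm y)) in *.
  assert (Hs : s <= (opnorm C + 1) * a * (vnorm x + vnorm y)).
  { unfold s. assert (0 <= a * (opnorm C * vnorm y + vnorm x)) by
      (apply Rmult_le_pos; [exact Ha|pose proof (Rmult_le_pos _ _ HnC Hy); lra]).
    lra. }
  assert (opnorm B * vnorm (vadd (u0 (C x)) (u1 y)) <= opnorm B * s)
    by (apply Rmult_le_compat_l; assumption).
  assert (opnorm B * s <= opnorm B * ((opnorm C + 1) * a * (vnorm x + vnorm y)))
    by (apply Rmult_le_compat_l; assumption).
  lra.
Qed.

Lemma lin_block (u0 u1 u2 : Y -> Y) :
  is_bounded_linear u0 -> is_bounded_linear u1 -> is_bounded_linear u2 ->
  is_bounded_linear (block u0 u1 u2).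
Proof.
  intros H0 H1 H2. split; [|split].
  - intros [x1 y1] [x2 y2]. unfold block; cbn; unfold ds_add; cbn.
    rewrite (lin_add C HC), (lin_add u0 H0), !(lin_add u1 H1), (lin_add u2 H2), !(lin_add B HB).
    f_equal; abel.
  - intros c [x y]. unfold block; cbn; unfold ds_scal; cbn.
    rewrite (lin_scal C HC), (lin_scal u0 H0), !(lin_scal u1 H1), (lin_scal u2 H2),
      <- !vscal_distr_v, (lin_scal B HB).
    reflexivity.
  - exists ((opnorm B + 1) * (opnorm C + 1) * (opnorm u0 + opnorm u1 + opnorm u2)).
    pose proof (opnorm_bound_nonneg u0 H0); pose proof (opnorm_bound_nonneg u1 H1);
      pose proof (opnorm_bound_nonneg u2 H2).
    apply op_bound_block; [lra| | |];
      (eapply op_bound_le; [apply op_bound_opnorm; assumption|lra]).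
Qed.

(* The powers of a block operator stay block operators as soon as the entry
   sequence [e] obeys the recursion obtained by multiplying two blocks. *)
Lemma opow_block (e : nat -> Y -> Y) :
  (forall u v, e 1%nat (vadd u v) = vadd (e 1%nat u) (e 1%nat v)) ->
  (forall u v, e 2%nat (vadd u v) = vadd (e 2%nat u) (e 2%nat v)) ->
  (forall y, e 0%nat (C (B y)) = vzero) ->
  (forall y, e 1%nat (C (B y)) = C (B y)) ->
  (forall k y, e 1%nat (e (S k) y) = e (S k) y) ->
  (forall k y, vadd (C (B (e k y))) (e 2%nat (e (S k) y)) = e (S (S k)) y) ->
  forall m p, opow (block (e 0%nat) (e 1%nat) (e 2%nat)) (S m) p
              = block (e m) (e (S m)) (e (S (S m))) p.
Proof.
  intros He1 He2 H0 H1 Hid Hstep m [x y]. induction m as [|m IH]; [reflexivity|].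
  change (opow (block (e 0%nat) (e 1%nat) (e 2%nat)) (S (S m)) (x, y)) with
    (block (e 0%nat) (e 1%nat) (e 2%nat) (opow (block (e 0%nat) (e 1%nat) (e 2%nat)) (S m) (x, y))).
  rewrite IH. unfold block; cbn [fst snd]. f_equal.
  - rewrite H0, vadd_0_l, He1, !Hid. reflexivity.
  - rewrite H1, He2, (lin_add B HB), (lin_add C HC), <- (Hstep m (C x)), <- (Hstep (S m) y).
    abel.
Qed.
End Blocks.

Section Candidate.
Variables (X Y : NormedCSpace) (B : Y -> X) (C : X -> Y) (D G : Y -> Y).
Hypotheses (HB : is_bounded_linear B) (HC : is_bounded_linear C)
  (HD : is_bounded_linear D) (HG : is_bounded_linear G).
Hypothesis HDG : forall y, D (G y) = G (D y).
Hypothesis HGDG : forall y, G (D (G y)) = G y.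
Hypothesis HDCB : forall y, D (C (B y)) = vzero.
Hypothesis HCBCB : forall y, C (B (C (B y))) = vzero.

Let M := opmatrix B C D.

Let Badd := lin_add B HB. Let Bopp := lin_opp B HB. Let Bzero := lin_zero B HB.
Let Cadd := lin_add C HC. Let Copp := lin_opp C HC. Let Czero := lin_zero C HC.
Let Dadd := lin_add D HD. Let Dopp := lin_opp D HD. Let Dzero := lin_zero D HD.
Let Gadd := lin_add G HG. Let Gopp := lin_opp G HG. Let Gzero := lin_zero G HG.

Lemma GGD y : G (G (D y)) = G y.
Proof. rewrite <- HDG; apply HGDG. Qed.

Lemma GCB y : G (C (B y)) = vzero.
Proof. rewrite <- GGD, HDCB, !Gzero; reflexivity. Qed.

Fixpoint Dpow_pi (m : nat) (y : Y) : Y :=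
  match m with O => vadd y (vopp (G (D y))) | S k => D (Dpow_pi k y) end.

Lemma D_Dpow_pi m y : D (Dpow_pi m y) = Dpow_pi (S m) y.
Proof. reflexivity. Qed.

Lemma G_Dpow_pi m y : G (Dpow_pi m y) = vzero.
Proof.
  induction m as [|m IH]; cbn [Dpow_pi].
  - rewrite Gadd, Gopp, GGD; apply vadd_opp.
  - rewrite <- HDG, IH; apply Dzero.
Qed.

Ltac push_lin := repeat progress rewrite ?Badd, ?Bopp, ?Bzero, ?Cadd, ?Copp, ?Czero,
  ?Dadd, ?Dopp, ?Dzero, ?Gadd, ?Gopp, ?Gzero, ?D_Dpow_pi, ?G_Dpow_pi,
  ?HDCB, ?HCBCB, ?GCB, ?HDG, ?GGD.

Definition K (y : Y) : Y := vadd (G y) (C (B (G (G (G y))))).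

Definition Minv : DirectSum X Y -> DirectSum X Y :=
  block X Y B C (fun y => K (G (G y))) (fun y => K (G y)) K.

Lemma M_Minv_comm : (fun p => M (Minv p)) = (fun p => Minv (M p)).
Proof.
  apply functional_extensionality; intros [x y].
  unfold M, Minv, block, opmatrix, K; cbn [fst snd]. f_equal; push_lin; abel.
Qed.

Lemma Minv_M_Minv : (fun p => Minv (M (Minv p))) = Minv.
Proof.
  apply functional_extensionality; intros [x y].
  unfold M, Minv, block, opmatrix, K; cbn [fst snd]. f_equal; push_lin; abel.
Qed.

Lemma lin_Minv : is_bounded_linear Minv.
Proof.
  pose proof (lin_comp G G HG HG) as HGG.
  pose proof (lin_comp _ G HGG HG) as HGGG.
  assert (HK : is_bounded_linear K)
    by exact (lin_plus _ _ HG (lin_comp _ C (lin_comp _ B HGGG HB) HC)).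
  apply lin_block; auto; [apply (lin_comp (fun y => G (G y)) K)|apply (lin_comp G K)]; auto.
Qed.

Definition Dqn (y : Y) : Y := vadd (D y) (vopp (D (D (G y)))).

Definition rcoef (k : nat) (y : Y) : Y :=
  match k with
  | O => vopp (K y)
  | S O => vadd (vadd y (vopp (G (D y)))) (vopp (C (B (G (G y)))))
  | S (S O) => vadd (vadd (D y) (vopp (G (D (D y))))) (vopp (C (B (G y))))
  | S (S (S j)) => vadd (Dpow_pi (S (S j)) y) (C (B (Dpow_pi j y)))
  end.

Lemma residual_block :
  (fun p => vadd (M p) (vopp (M (M (Minv p)))))
  = block X Y B C (rcoef 0) (rcoef 1) (rcoef 2).
Proof.
  apply functional_extensionality; intros [x y].
  unfold M, Minv, block, opmatrix, rcoef, K; cbn [vadd vopp DirectSum].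
  unfold ds_add, ds_opp; cbn [fst snd]. f_equal; push_lin; abel.
Qed.

Lemma Dpow_pi_add m u v : Dpow_pi m (vadd u v) = vadd (Dpow_pi m u) (Dpow_pi m v).
Proof. induction m as [|m IH]; cbn [Dpow_pi]; [|rewrite IH]; push_lin; abel. Qed.

Lemma rcoef_add k u v : rcoef k (vadd u v) = vadd (rcoef k u) (rcoef k v).
Proof. destruct k as [|[|[|j]]]; cbn [rcoef]; unfold K; rewrite ?Dpow_pi_add; push_lin; abel. Qed.

Lemma rcoef0_CB y : rcoef 0 (C (B y)) = vzero.
Proof. cbn [rcoef]; unfold K; push_lin; abel. Qed.

Lemma rcoef1_CB y : rcoef 1 (C (B y)) = C (B y).
Proof. cbn [rcoef]; push_lin; abel. Qed.

Lemma rcoef1_idem k y : rcoef 1 (rcoef (S k) y) = rcoef (S k) y.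
Proof. destruct k as [|[|j]]; cbn [rcoef]; push_lin; abel. Qed.

Lemma rcoef_step k y : vadd (C (B (rcoef k y))) (rcoef 2 (rcoef (S k) y)) = rcoef (S (S k)) y.
Proof.
  destruct k as [|[|[|i]]]; cbn [rcoef]; [unfold K| | |]; cbn [Dpow_pi]; push_lin; abel.
Qed.

Lemma Dpow_pi_shift j m y : Dpow_pi (j + m) y = opow Dqn j (Dpow_pi m y).
Proof.
  induction j as [|j IH]; [reflexivity|].
  change (D (Dpow_pi (j + m) y) = Dqn (opow Dqn j (Dpow_pi m y))).
  rewrite <- IH; unfold Dqn. rewrite G_Dpow_pi, !Dzero. abel.
Qed.

Lemma rcoef_tail r i y : rcoef (3 + r + i) y
  = vadd (opow Dqn i (Dpow_pi (2 + r) y)) (C (B (opow Dqn i (Dpow_pi r y)))).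
Proof.
  rewrite <- !Dpow_pi_shift.
  replace (i + (2 + r))%nat with (2 + (r + i))%nat by lia.
  rewrite (Nat.add_comm i r). reflexivity.
Qed.

Lemma lin_Dqn : is_bounded_linear Dqn.
Proof. exact (lin_plus _ _ HD (lin_neg _ (lin_comp _ D (lin_comp G D HG HD) HD))). Qed.

Lemma lin_Dpow_pi m : is_bounded_linear (Dpow_pi m).
Proof.
  induction m as [|m IH].
  - exact (lin_plus _ _ lin_id (lin_neg _ (lin_comp D G HD HG))).
  - exact (lin_comp _ D IH HD).
Qed.

Definition tail_const (r : nat) : R :=
  opnorm (Dpow_pi (2 + r)) + opnorm C * opnorm B * opnorm (Dpow_pi r).

Lemma op_bound_rcoef r i :
  op_bound (rcoef (3 + r + i)) (opnorm (opow Dqn i) * tail_const r).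
Proof.
  intro y; rewrite rcoef_tail; revert y.
  pose proof (opow_lin Dqn i lin_Dqn) as HQ.
  eapply op_bound_le; [apply op_bound_add|].
  - apply op_bound_comp; [exact HQ|apply op_bound_opnorm, lin_Dpow_pi].
  - do 2 (apply op_bound_comp; [assumption|]).
    apply op_bound_comp; [exact HQ|apply op_bound_opnorm, lin_Dpow_pi].
  - apply Req_le; unfold tail_const; ring.
Qed.

Lemma residual_quasinilpotent :
  quasinilpotent Dqn -> quasinilpotent (fun p => vadd (M p) (vopp (M (M (Minv p))))).
Proof.
  intro Hqn; rewrite residual_block.
  assert (Htail : forall r, 0 <= tail_const r).
  { intro r; unfold tail_const.
    pose proof (opnorm_bound_nonneg _ (lin_Dpow_pi (2 + r))).
    pose proof (opnorm_bound_nonneg _ (lin_Dpow_pi r)).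
    pose proof (opnorm_bound_nonneg _ HB); pose proof (opnorm_bound_nonneg _ HC).
    assert (0 <= opnorm C * opnorm B * opnorm (Dpow_pi r)) by (repeat apply Rmult_le_pos; lra).
    lra. }
  set (T := tail_const 0 + tail_const 1 + tail_const 2).
  pose proof (Htail 0%nat); pose proof (Htail 1%nat); pose proof (Htail 2%nat).
  pose proof (opnorm_bound_nonneg _ HB); pose proof (opnorm_bound_nonneg _ HC).
  apply (quasinilpotent_of_pow_bound _ _ ((opnorm B + 1) * (opnorm C + 1) * T) 4 lin_Dqn);
    [unfold T; repeat apply Rmult_le_pos; lra| |exact Hqn].
  intros n p. change (4 + n)%nat with (S (3 + n)).
  rewrite (opow_block X Y B C HB HC rcoef) by
    (intros; apply rcoef_add || apply rcoef0_CB || apply rcoef1_CB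
     || apply rcoef1_idem || apply rcoef_step).
  revert p. pose proof (opnorm_bound_nonneg _ (opow_lin Dqn n lin_Dqn)) as HQ.
  assert (Hr : forall r, tail_const r <= T ->
    op_bound (rcoef (3 + r + n)) (opnorm (opow Dqn n) * T)).
  { intros r Hle. eapply op_bound_le; [apply op_bound_rcoef|].
    apply Rmult_le_compat_l; assumption. }
  eapply op_bound_le; [apply op_bound_block; [assumption|assumption| |
    apply (Hr 0%nat)|apply (Hr 1%nat)|apply (Hr 2%nat)]|]; unfold T in *; first [lra|apply Rmult_le_pos; lra].
Qed.
End Candidate.

Theorem lemma3p10 (X Y : NormedCSpace) (HX : complete X) (HY : complete Y)
  (B : Y -> X) (C : X -> Y) (D : Y -> Y)
  (HB : is_bounded_linear B) (HC : is_bounded_linear C) (HD : is_bounded_linear D)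
  (HDd : has_gDrazin D)
  (HDCB : (fun y => D (C (B y))) = (fun _ => vzero))
  (HCBCB : (fun y => C (B (C (B y)))) = (fun _ => vzero)) :
  has_gDrazin (opmatrix B C D).
Proof.
  destruct HDd as (G & HG & HGDG & HDG & Hqn).
  pose proof (equal_f HDG) as HDG'; pose proof (equal_f HGDG) as HGDG'.
  pose proof (equal_f HDCB) as HDCB'; pose proof (equal_f HCBCB) as HCBCB'.
  exists (Minv X Y B C G). split; [|split; [|split]].
  - exact (lin_Minv X Y B C G HB HC HG).
  - exact (Minv_M_Minv X Y B C D G HB HC HD HG HDG' HGDG' HDCB' HCBCB').
  - exact (M_Minv_comm X Y B C D G HB HC HD HG HDG' HGDG' HDCB' HCBCB').
  - exact (residual_quasinilpotent X Y B C D G HB HC HD HG HDG' HGDG' HDCB' HCBCB' Hqn).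
Qed.
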